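(* In the setting described in the context, assume $L_\varepsilon\to\infty$ as $\varepsilon\to0$. Define for $X>0$ $$Q_\varepsilon(X):=\int_0^1\frac{h_\varepsilon(y)}{L_\varepsilon}K_\varepsilon(y,L_\varepsilon X)\,dy.$$ Then there exist a subsequence of $\varepsilon\to0$ and a continuous function $Q\colon(0,\infty)\to\mathbb{R}$ such that $Q_\varepsilon\to Q$ locally uniformly on $(0,\infty)$ along this subsequence.
   Context: Fix $a>0$, $b<1$, $\gamma=b-a$. $K\colon(0,\infty)^2\to[0,\infty)$ is $C^1$, symmetric, homogeneous of degree $\gamma$ ($K(\lambda x,\lambda y)=\lambda^\gamma K(x,y)$), satisfies $C_1(x^{-a}y^b+x^by^{-a})\le K(x,y)\le C_2(x^{-a}y^b+x^by^{-a})$ with $C_1,C_2>0$, and for every $[d,D]\subset(0,\infty)$ there is $C_3(d,D)$ with $|\partial_xK(x,y)|\le C_3(y^{-a}+y^b)$ for $x\in[d,D]$, $y>0$. Fix $\rho\in(\max\{b,0\},1)$. For $\varepsilon>0$ let $K_\varepsilon(y,z)=K(y+\varepsilon,z+\varepsilon)$ and $I_\varepsilon[g](x)=\int_0^x\int_{x-y}^\infty\frac{K_\varepsilon(y,z)}{z}g(y)g(z)\,dz\,dy$. Let $\varepsilon$ range over a sequence of positive numbers tending to $0$, and for each such $\varepsilon$ let $h_\varepsilon\colon(0,\infty)\to[0,\infty)$ be continuous with $\int_0^rh_\varepsilon\,dx\le r^{1-\rho}$ for all $r>0$, $\lim_{r\to\infty}r^{\rho-1}\int_0^rh_\varepsilon\,dx=1$,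 and $\int_0^\infty\varphi'I_\varepsilon[h_\varepsilon]\,dx=\int_0^\infty\varphi'(x)xh_\varepsilon(x)\,dx+(1-\rho)\int_0^\infty\varphi h_\varepsilon\,dx$ for all $\varphi\in C_c^\infty([0,\infty))$. Set $\mu_\varepsilon=\int_0^1h_\varepsilon(x)(x+\varepsilon)^{-a}dx$, $\lambda_\varepsilon=\int_0^1h_\varepsilon(x)(x+\varepsilon)^bdx$, $L_\varepsilon=\max(\lambda_\varepsilon^{1/(1+a)},\mu_\varepsilon^{1/(1-b)})$. *)

From HB Require Import structures.
From mathcomp Require Import all_boot all_order all_algebra.
From mathcomp Require Import all_classical all_reals all_analysis.
Set Implicit Arguments. Unset Strict Implicit. Unset Printing Implicit Defensive.
Import Order.TTheory GRing.Theory Num.Theory.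
Import numFieldNormedType.Exports.
Local Open Scope classical_set_scope.
Local Open Scope ring_scope.

Section Defs.
Variable R : realType.
Local Notation mu := (@lebesgue_measure R).

Definition oitv (l r : R) : set R := [set x | l < x < r].
Definition oray (l : R) : set R := [set x | l < x].

Definition C1_quadrant (K : R -> R -> R) : Prop :=
  forall x y : R, 0 < x -> 0 < y ->
    [/\ derivable (fun t => K t y) x 1,
        derivable (fun t => K x t) y 1,
        {for (x, y), continuous (fun p : R * R => K p.1 p.2)},
        {for (x, y), continuous (fun p : R * R => derive1 (fun t => K t p.2) p.1)}
      & {for (x, y), continuous (fun p : R * R => derive1 (fun t => K p.1 t) p.2)}].

Definition dxK (K : R -> R -> R) (x y : R) : R := derive1 (fun t => K t y) x.

Definition Keps (K : R -> R -> R) (eps y z : R) : R := K (y + eps) (z + eps).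

(* I_eps[g](x) = int_0^x int_{x-y}^oo K_eps(y,z)/z g(y) g(z) dz dy
   (extended-real valued: the integrand is nonnegative). *)
Definition Ieps (K : R -> R -> R) (ep : R) (g : R -> R) (x : R) : \bar R :=
  (\int[mu]_(y in oitv 0 x) (\int[mu]_(z in oray (x - y)) (Keps K ep y z / z * g y * g z)%:E))%E.

(* phi in C_c^oo([0,oo)): smooth function whose support meets [0,oo)
   in a bounded set (restriction to [0,oo) of a smooth function). *)
Definition test_fun (phi : R -> R) : Prop :=
  (forall (n : nat) (x : R), derivable (derive1n n phi) x 1) /\
  (exists M : R, forall x, M < x -> phi x = 0).

Definition mu_eps (h : R -> R) (a eps : R) : R :=
  Rintegral mu (oitv 0 1) (fun x => h x * (x + eps) `^ (- a)).

Definition lambda_eps (h : R -> R) (b eps : R) : R :=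
  Rintegral mu (oitv 0 1) (fun x => h x * (x + eps) `^ b).

Definition L_eps (h : R -> R) (a b eps : R) : R :=
  Num.max ((lambda_eps h b eps) `^ (1 / (1 + a)))
          ((mu_eps h a eps) `^ (1 / (1 - b))).

Definition Q_eps (K : R -> R -> R) (h : R -> R) (a b eps X : R) : R :=
  Rintegral mu (oitv 0 1)
    (fun y => h y / L_eps h a b eps * Keps K eps y (L_eps h a b eps * X)).

End Defs.

(* The upper bound on K, rescaled by L = L_eps, shows that |Q_eps(X)| is at most
   C2 ((X + eps/L)^b L^(b-1) mu_eps + (X + eps/L)^(-a) L^(-a-1) lambda_eps), and the
   definition of L_eps is exactly what makes L^(b-1) mu_eps <= 1 and
   L^(-a-1) lambda_eps <= 1.  By symmetry and homogeneity,
   K(y+eps, L X+eps) = L^(b-a) K(X+eps/L, (y+eps)/L), so the bound on the partial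
   derivative of K in its first variable makes Q_eps Lipschitz on every [c,d] in
   (0,oo), uniformly in eps.  A pointwise bounded, locally equi-Lipschitz sequence
   has a locally uniformly convergent subsequence (Arzela-Ascoli: extract a
   diagonal subsequence converging on the positive rationals, then use the
   Lipschitz bound to get uniform Cauchy estimates), and the limit is again
   locally Lipschitz, hence continuous. *)

From HB Require Import structures.
From mathcomp Require Import all_boot all_order all_algebra.
From mathcomp Require Import all_classical all_reals all_analysis.
From mathcomp Require Import ring lra measurable_realfun.
Import Order.TTheory GRing.Theory Num.Theory.
Import numFieldNormedType.Exports.
Local Open Scope classical_set_scope.
Local Open Scope ring_scope.

Lemma homo_ltn_geq (s : nat -> nat) : {homo s : m n / (m < n)%N} -> forall n, (n <= s n)%N.
Proof. by move=> s_incr; elim=> // n IHn; apply: leq_ltn_trans IHn (s_incr _ _ _). Qed.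

Fixpoint nested_subseq (E : nat -> (nat -> nat) -> nat -> nat) (k : nat) : nat -> nat :=
  if k is k'.+1 then nested_subseq E k' \o E k (nested_subseq E k') else E 0%N id.

Section nested_subseq.
Variable E : nat -> (nat -> nat) -> nat -> nat.
Hypothesis E_incr : forall k phi, {homo E k phi : m n / (m < n)%N}.

Lemma nested_subseq_incr k : {homo nested_subseq E k : m n / (m < n)%N}.
Proof. by elim: k => [|k IHk] m n mn //=; [exact: E_incr | apply/IHk/E_incr]. Qed.

Lemma nested_subseq_tail k d n :
  exists2 m, (n <= m)%N & nested_subseq E (k + d) n = nested_subseq E k m.
Proof.
elim: d n => [|d IHd] n; first by exists n; rewrite ?addn0.
rewrite addnS /=.
have [m nm ->] := IHd (E (k + d).+1 (nested_subseq E (k + d)) n).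
by exists m => //; apply: leq_trans nm; apply: homo_ltn_geq.
Qed.

Lemma nested_subseq_diag_incr : {homo (fun n => nested_subseq E n n) : m n / (m < n)%N}.
Proof.
apply: homo_ltn ltn_trans _ => n /=; apply: nested_subseq_incr.
exact: homo_ltn_geq.
Qed.

End nested_subseq.

Lemma diagonal_extraction {R : realType} (u : nat -> nat -> R) :
  (forall k, exists B, forall n, `|u k n| <= B) ->
  exists2 sigma : nat -> nat, {homo sigma : m n / (m < n)%N} & forall k, cvgn (u k \o sigma).
Proof.
move=> u_bounded.
have /choice[E0 E0P] : forall kphi : nat * (nat -> nat), exists psi : nat -> nat,
    {homo psi : m n / (m < n)%N} /\ cvgn (u kphi.1 \o kphi.2 \o psi).
  move=> [k phi]; have [B uB] := u_bounded k.
  have [|psi psi_incr psi_cvg] := @bolzano_weierstrass R (u k \o phi).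
    exists B; split; first exact: num_real.
    by move=> M BM n _; apply: le_trans (uB _) (ltW BM).
  by exists psi; split => // m n mn; rewrite ltnNge -leEnat psi_incr -ltnNge.
pose E k phi := E0 (k, phi).
have E_incr k phi : {homo E k phi : m n / (m < n)%N} by case: (E0P (k, phi)).
exists (fun n => nested_subseq E n n); first exact: nested_subseq_diag_incr.
move=> k; set phi := nested_subseq E k.
have phi_cvg : cvgn (u k \o phi).
  by case: k @phi => [|k]; [case: (E0P (0%N, id)) | case: (E0P (k.+1, nested_subseq E k))].
apply/cvg_ex; exists (lim (u k \o phi @ \oo)); apply/cvgrPdist_lt => e e0.
have [N _ uN] := (cvgrPdist_lt _ _).1 phi_cvg e e0.
near=> n; have kn : (k <= n)%N by near: n; exact: nbhs_infty_ge.
have [m nm] := @nested_subseq_tail E E_incr k (n - k) n; rewrite subnKC // => /= ->.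
apply: uN; apply: leq_trans nm; near: n; exact: nbhs_infty_ge.
Unshelve. all: by end_near. Qed.

Section positive_grid.
Variable R : realType.

Definition pos_grid (k : nat) : R :=
  if (unpickle k : option (nat * nat)) is Some (i, m) then i.+1%:R / m.+1%:R else 1.

Lemma pos_grid_gt0 k : 0 < pos_grid k.
Proof. by rewrite /pos_grid; case: unpickle => [[i m]|] //; rewrite divr_gt0 ?ltr0n. Qed.

Lemma pos_grid_net (c d eta : R) : 0 < c -> 0 < eta -> exists s : seq nat,
  forall x, c <= x <= d -> exists2 k, k \in s & x - eta < pos_grid k <= x.
Proof.
move=> c0 eta0; set m := Num.truncn (eta^-1 + c^-1); set w : R := m.+1%:R.
have w0 : 0 < w by rewrite ltr0n.
have mw : eta^-1 + c^-1 < w by exact: truncnS_gt.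
have [ci etai] : 0 < c^-1 /\ 0 < eta^-1 by rewrite !invr_gt0.
have eta_w : 1 < eta * w by rewrite -(mulfV (lt0r_neq0 eta0)) ltr_pM2l //; lra.
have c_w : 1 < c * w by rewrite -(mulfV (lt0r_neq0 c0)) ltr_pM2l //; lra.
exists [seq pickle (i, m) | i <- iota 0 (Num.truncn (d * w))] => x /andP[cx xd].
have xw0 : 0 <= x * w by rewrite mulr_ge0 // ltW // (lt_le_trans c0 cx).
set t := Num.truncn (x * w).
have tx : t%:R <= x * w by rewrite truncn_le.
have xt : x * w < t.+1%:R by exact: truncnS_gt.
have t0 : (0 < t)%N by rewrite truncn_gt0 ltW // (lt_le_trans c_w) // ler_pM2r.
exists (pickle (t.-1, m)).
  apply/mapP; exists t.-1 => //.
  rewrite mem_iota add0n prednK // truncn_ge_nat ?mulr_ge0 //; last by lra.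
  by rewrite (le_trans tx) // ler_pM2r.
rewrite /pos_grid pickleK prednK // -/w ler_pdivrMr // ltr_pdivlMr // tx andbT.
by rewrite -natr1 in xt; nra.
Qed.

End positive_grid.

Lemma near_all_in {T : Type} (F : set_system T) {FF : Filter F} (I : eqType)
    (s : seq I) (P : I -> T -> Prop) :
  (forall i, i \in s -> \forall x \near F, P i x) -> \forall x \near F, forall i, i \in s -> P i x.
Proof.
elim: s => [|j s IHs] sP; first exact: nearW.
have [Pj Ps] : (\forall x \near F, P j x) /\ \forall x \near F, forall i, i \in s -> P i x.
  by split; [apply: sP; exact: mem_head | apply: IHs => i si; apply: sP; rewrite inE si orbT].
by near=> x => i; rewrite inE => /predU1P[->|]; [near: x | move: i; near: x].
Unshelve. all: by end_near. Qed.

Section equilipschitz_limit.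
Variables (R : realType) (g : nat -> R -> R).
Hypothesis g_lipschitz : forall c d, 0 < c -> c <= d -> exists2 k, 0 < k &
  forall n x y, c <= x <= d -> c <= y <= d -> `|g n x - g n y| <= k * `|x - y|.
Hypothesis g_cvg_grid : forall k, cvgn (fun n => g n (pos_grid R k)).

Lemma equilipschitz_uniform_cauchy c d : 0 < c -> c <= d -> forall e, 0 < e ->
  exists N, forall n m, (N <= n)%N -> (N <= m)%N ->
    forall x, c <= x <= d -> `|g n x - g m x| < e.
Proof.
move=> c0 cd e e0; have c20 : 0 < c / 2 by rewrite divr_gt0.
have cd2 : c / 2 <= d by lra.
have [k k0 g_lip] := g_lipschitz (c / 2) d c20 cd2.
set eta := Num.min (c / 2) (e / (4 * k)).
have eta0 : 0 < eta by rewrite lt_min c20 divr_gt0 // mulr_gt0.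
have [s s_net] := @pos_grid_net R c d eta c0 eta0.
have e40 : 0 < e / 4 by rewrite divr_gt0.
have : \forall n \near \oo, forall p, p \in s ->
    `|lim (g i (pos_grid R p) @[i --> \oo]) - g n (pos_grid R p)| < e / 4.
  by apply: near_all_in => p _; exact: (cvgrPdist_lt _ _).1 (g_cvg_grid p) _ e40.
case=> N _ gN; exists N => n m Nn Nm x cxd.
have [p ps /andP[xp px]] := s_net x cxd; move: cxd => /andP[cx xd].
have := gN n Nn p ps; have := gN m Nm p ps; move: xp px.
set q := pos_grid R p; set l := lim _ => xp px lm ln.
have eta_c : eta <= c / 2 by rewrite ge_min lexx.
have eta_e : eta <= e / (4 * k) by rewrite ge_min lexx orbT.
have cq : c / 2 <= q <= d by apply/andP; split; lra.
have cx2 : c / 2 <= x <= d by apply/andP; split; lra.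
have kxq : k * `|x - q| <= e / 4.
  have xq : `|x - q| <= e / (4 * k) by rewrite ger0_norm; lra.
  have -> : e / 4 = k * (e / (4 * k)) by field; exact: lt0r_neq0.
  by rewrite ler_pM2l.
have := g_lip n x q cx2 cq; have := g_lip m q x cq cx2; rewrite (distrC q x).
have := ler_distD l (g n x) (g m x); have := ler_distD (g n q) (g n x) l.
have := ler_distD (g m q) l (g m x); rewrite (distrC (g n q)).
lra.
Qed.

Definition pointwise_limit x : R := lim (g n x @[n --> \oo]).

Lemma pointwise_limit_cvg x : 0 < x -> g n x @[n --> \oo] --> pointwise_limit x.
Proof.
move=> x0; apply/cauchy_cvgP/cauchy_exP => e e0.
have [N gN] := equilipschitz_uniform_cauchy x x x0 (lexx x) _ e0.
exists (g N x), N => // n Nn /=; rewrite -ball_normE /=.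
by apply: gN; rewrite ?lexx.
Qed.

Lemma pointwise_limit_uniform c d : 0 < c -> c <= d -> forall e, 0 < e ->
  exists N, forall n, (N <= n)%N -> forall x, c <= x <= d -> `|g n x - pointwise_limit x| < e.
Proof.
move=> c0 cd e e0; have e20 : 0 < e / 2 by rewrite divr_gt0.
have [N gN] := equilipschitz_uniform_cauchy c d c0 cd _ e20.
exists N => n Nn x cxd; have x0 : 0 < x by case/andP: cxd; lra.
have [M _ gM] := (cvgrPdist_lt _ _).1 (pointwise_limit_cvg x x0) _ e20.
have := gN n (maxn N M) Nn (leq_maxl _ _) x cxd.
have := gM (maxn N M) (leq_maxr _ _); rewrite distrC.
have := ler_distD (g (maxn N M) x) (g n x) (pointwise_limit x).
lra.
Qed.

Lemma pointwise_limit_lipschitz c d : 0 < c -> c <= d -> exists2 k, 0 < k &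
  forall x y, c <= x <= d -> c <= y <= d ->
    `|pointwise_limit x - pointwise_limit y| <= k * `|x - y|.
Proof.
move=> c0 cd; have [k k0 g_lip] := g_lipschitz c d c0 cd.
exists k => // x y cxd cyd; apply/ler_addgt0Pr => e e0.
have e20 : 0 < e / 2 by rewrite divr_gt0.
have [x0 y0] : 0 < x /\ 0 < y by case/andP: cxd; case/andP: cyd; lra.
have [Nx _ gNx] := (cvgrPdist_lt _ _).1 (pointwise_limit_cvg x x0) _ e20.
have [Ny _ gNy] := (cvgrPdist_lt _ _).1 (pointwise_limit_cvg y y0) _ e20.
set n := maxn Nx Ny.
have := gNx n (leq_maxl _ _); have := gNy n (leq_maxr _ _); rewrite distrC.
have := g_lip n x y cxd cyd.
have := ler_distD (g n x) (pointwise_limit x) (pointwise_limit y).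
have := ler_distD (g n y) (g n x) (pointwise_limit y).
lra.
Qed.

Lemma pointwise_limit_continuous x : 0 < x -> {for x, continuous pointwise_limit}.
Proof.
move=> x0; have x20 : 0 < x / 2 by rewrite divr_gt0.
have x2x : x / 2 <= 2 * x by lra.
have [k k0 Q_lip] := pointwise_limit_lipschitz (x / 2) (2 * x) x20 x2x.
apply/cvgrPdist_lt => e e0; apply/nbhs_ballP.
exists (Num.min (x / 2) (e / k)); first by rewrite /= lt_min x20 divr_gt0.
move=> y /=; rewrite lt_min => /andP[xy xye].
move: xy; rewrite ltr_distlC => /andP[xy1 xy2]; rewrite ltr_pdivlMr // in xye.
have xin : x / 2 <= x <= 2 * x by apply/andP; split; lra.
have yin : x / 2 <= y <= 2 * x by apply/andP; split; lra.
have := Q_lip x y xin yin; lra.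
Qed.

End equilipschitz_limit.

Theorem arzela_ascoli_pos {R : realType} (f : nat -> R -> R) :
  (forall x, 0 < x -> exists B, forall n, `|f n x| <= B) ->
  (forall c d, 0 < c -> c <= d -> exists k, forall n x y, c <= x <= d -> c <= y <= d ->
     `|f n x - f n y| <= k * `|x - y|) ->
  exists (sigma : nat -> nat) (Q : R -> R),
    (forall n, (sigma n < sigma n.+1)%N) /\
    (forall x, 0 < x -> {for x, continuous Q}) /\
    (forall c d, 0 < c -> c <= d -> forall e, 0 < e ->
       exists N : nat, forall n, (N <= n)%N -> forall X, c <= X -> X <= d ->
         `|f (sigma n) X - Q X| < e).
Proof.
move=> f_bounded f_lipschitz.
have [sigma sigma_incr f_cvg] := @diagonal_extraction R (fun k n => f n (pos_grid R k))
  (fun k => f_bounded _ (pos_grid_gt0 R k)).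
pose g n := f (sigma n).
have g_lipschitz c d : 0 < c -> c <= d -> exists2 k, 0 < k &
    forall n x y, c <= x <= d -> c <= y <= d -> `|g n x - g n y| <= k * `|x - y|.
  move=> c0 cd; have [k f_lip] := f_lipschitz c d c0 cd.
  exists (`|k| + 1) => [|n x y cxd cyd]; first by rewrite ltr_pwDr.
  apply: (le_trans (f_lip _ _ _ cxd cyd)); rewrite ler_wpM2r //.
  by rewrite (le_trans (ler_norm k)) // lerDl.
exists sigma, (@pointwise_limit R g); split; [|split].
- by move=> n; apply: sigma_incr.
- exact: @pointwise_limit_continuous R g g_lipschitz f_cvg.
- move=> c d c0 cd e e0.
  have [N gN] := @pointwise_limit_uniform R g g_lipschitz f_cvg c d c0 cd _ e0.
  by exists N => n Nn X cX Xd; apply: gN => //; rewrite cX.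
Qed.

Lemma powR_le_ends {R : realType} {p q u : R} (s : R) : 0 < p -> p <= u <= q ->
  u `^ s <= p `^ s + q `^ s.
Proof.
move=> p0 /andP[pu uq]; have u0 : 0 < u by exact: lt_le_trans pu.
have [s0|s0] := leP 0 s.
  have : u `^ s <= q `^ s.
    by apply: (ge0_ler_powR s0) => //; rewrite nnegrE ltW // (lt_le_trans u0).
  by have := powR_ge0 p s; lra.
have : u `^ s <= p `^ s.
  have inv_powRN x : x `^ s = (x `^ (- s))^-1 by rewrite -powRN opprK.
  rewrite !inv_powRN lef_pV2 ?posrE ?powR_gt0 //.
  by apply: (ge0_ler_powR _) => //; rewrite ?nnegrE ?ltW // oppr_gt0.
by have := powR_ge0 q s; lra.
Qed.

Section integrals_against_h.
Variables (R : realType) (h : R -> R) (eps : R).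
Local Notation mu := (@lebesgue_measure R).
Local Notation I01 := (oitv (0 : R) 1).
Hypothesis h_ge0 : forall x, 0 < x -> 0 <= h x.
Hypothesis h_cont : forall x, 0 < x -> {for x, continuous h}.
Hypothesis h_mass : (\int[mu]_(x in I01) (h x)%:E <= 1)%E.
Hypothesis eps_gt0 : 0 < eps.

Lemma oitv01E : I01 = `]0, 1[%classic.
Proof. by apply/seteqP; split => x /=; rewrite in_itv. Qed.

Lemma measurable_oitv01 : (R.-ocitv.-measurable).-sigma.-measurable I01.
Proof. by rewrite oitv01E; exact: measurable_itv. Qed.
#[local] Hint Resolve measurable_oitv01 : core.

Lemma continuous_measurable_oitv01 (F : R -> R) :
  (forall y, 0 < y < 1 -> {for y, continuous F}) -> measurable_fun I01 F.
Proof.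
move=> F_cont; apply: open_continuous_measurable_fun.
  by rewrite oitv01E; exact: interval_open.
by move=> y; rewrite inE; exact: F_cont.
Qed.

Lemma integrable_h : mu.-integrable I01 (EFin \o h).
Proof.
apply/integrableP; split.
  by apply/measurable_EFinP; apply: continuous_measurable_oitv01 => y /andP[y0 _]; exact: h_cont.
apply: le_lt_trans (le_lt_trans h_mass (ltry 1)); rewrite le_eqVlt; apply: predU1l.
by apply: eq_integral => y; rewrite inE /= => /andP[y0 _]; rewrite ger0_norm ?h_ge0.
Qed.

Lemma integrable_h_shiftpow s : mu.-integrable I01 (EFin \o (fun y => h y * (y + eps) `^ s)).
Proof.
apply: le_integrable (integrableZl _ (eps `^ s + (1 + eps) `^ s) integrable_h) => //.
  apply/measurable_EFinP; apply: measurable_funM.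
    by apply: continuous_measurable_oitv01 => y /andP[y0 _]; exact: h_cont.
  have shift_meas : measurable_fun I01 (fun y : R => y + eps).
    by apply: measurable_funD => //; exact: measurable_id.
  exact: measurableT_comp (@measurable_powR R s) shift_meas.
move=> y /= /andP[y0 y1]; rewrite lee_fin !ger0_norm ?mulr_ge0 ?addr_ge0 ?powR_ge0 ?h_ge0 //.
rewrite mulrC; apply: ler_wpM2r; first exact: h_ge0.
by apply: powR_le_ends => //; apply/andP; split; lra.
Qed.

Lemma dominated_by_h_shiftpow (G : R -> R) (s t al be : R) :
  measurable_fun I01 G ->
  (forall y, 0 < y < 1 -> `|G y| <= h y * (al * (y + eps) `^ s + be * (y + eps) `^ t)) ->
  mu.-integrable I01 (EFin \o G) /\
  `|Rintegral mu I01 G| <= al * Rintegral mu I01 (fun y => h y * (y + eps) `^ s)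
                          + be * Rintegral mu I01 (fun y => h y * (y + eps) `^ t).
Proof.
move=> G_meas G_dom.
pose Hs y := h y * (y + eps) `^ s; pose Ht y := h y * (y + eps) `^ t.
have Hs_int := integrable_h_shiftpow s; have Ht_int := integrable_h_shiftpow t.
have alHs_int : mu.-integrable I01 (EFin \o (fun y => al * Hs y)).
  by apply: eq_integrable (integrableZl _ al Hs_int).
have beHt_int : mu.-integrable I01 (EFin \o (fun y => be * Ht y)).
  by apply: eq_integrable (integrableZl _ be Ht_int).
have H_int : mu.-integrable I01 (EFin \o (fun y => al * Hs y + be * Ht y)).
  by apply: eq_integrable (integrableD measurable_oitv01 alHs_int beHt_int).
have H_dom y : I01 y -> `|G y| <= al * Hs y + be * Ht y.
  by move=> y01; rewrite /Hs /Ht (le_trans (G_dom y y01)) // le_eqVlt; apply: predU1l; ring.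
have G_int : mu.-integrable I01 (EFin \o G).
  apply: le_integrable H_int => //; first exact/measurable_EFinP.
  move=> y y01 /=; rewrite lee_fin (le_trans (H_dom y y01)) //; exact: ler_norm.
split => //; apply: le_trans (le_normr_Rintegral measurable_oitv01 G_int) _.
rewrite -RintegralZl // -RintegralZl // -RintegralD //.
by apply: le_Rintegral => //; exact: integrable_norm.
Qed.

End integrals_against_h.

Lemma dist_le_derive1_bound {R : realType} (f : R -> R) (M c D s1 s2 : R) :
  (forall x, c <= x <= D -> derivable f x 1 /\ `|derive1 f x| <= M) ->
  c <= s1 <= D -> c <= s2 <= D -> `|f s1 - f s2| <= M * `|s1 - s2|.
Proof.
move=> f_der.
wlog s12 : s1 s2 / s1 <= s2.
  move=> W s1in s2in; have [s12|s21] := leP s1 s2; first exact: W.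
  by rewrite distrC (distrC s1); apply: W => //; exact: ltW.
move=> /andP[cs1 s1D] /andP[cs2 s2D].
have in_cD x : x \in `[s1, s2] -> c <= x <= D.
  by rewrite in_itv /= => /andP[? ?]; apply/andP; split; lra.
rewrite distrC (distrC s1).
have [||x xin ->] := @MVT_segment R f (derive1 f) s1 s2 s12.
- move=> x xin; rewrite derive1E; apply/derivableP; apply: (f_der x _).1.
  by apply: in_cD; rewrite in_itv /= !ltW ?(itvP xin).
- apply: derivable_within_continuous => x /in_cD xin; exact: (f_der x xin).1.
rewrite normrM (ger0_norm (_ : 0 <= s2 - s1)) ?subr_ge0 //.
by apply: ler_wpM2r; [rewrite subr_ge0 | exact: (f_der x (in_cD x xin)).2].
Qed.

Lemma powR_ratio {R : realType} (L u r : R) : 0 < L -> 0 <= u -> (u / L) `^ r = u `^ r / L `^ r.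
Proof.
move=> L0 u0; have L0' := ltW L0.
by rewrite powRM ?invr_ge0 // -powR_inv1 // -powRrM mulN1r powRN.
Qed.

Lemma normalized_moment_le1 {R : realType} {r m L : R} : r < 1 -> 0 <= m -> 0 < L ->
  m `^ (1 / (1 - r)) <= L -> L `^ r / L * m <= 1.
Proof.
move=> r1 m0 L0 mL; have r0 : 0 < 1 - r by lra.
have m_le : m <= L `^ (1 - r).
  have -> : m = (m `^ (1 / (1 - r))) `^ (1 - r).
    by rewrite -powRrM mul1r mulVf ?lt0r_neq0 // powRr1.
  by apply: (ge0_ler_powR (ltW r0)) => //; rewrite nnegrE ?powR_ge0 ?ltW.
have Lr : L `^ r * L `^ (1 - r) = L.
  by rewrite -powRD ?lt0r_neq0 ?implybT // addrC subrK powRr1 // ltW.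
apply: le_trans (ler_wpM2l _ m_le) _; first by rewrite divr_ge0 ?powR_ge0 ?ltW.
by rewrite mulrAC Lr mulfV ?lt0r_neq0.
Qed.

Section Q_eps_estimates.
Variables (R : realType) (a b C2 : R) (K : R -> R -> R).
Hypothesis a_gt0 : 0 < a.
Hypothesis b_lt1 : b < 1.
Hypothesis K_C1 : C1_quadrant K.
Hypothesis K_ge0 : forall x y, 0 < x -> 0 < y -> 0 <= K x y.
Hypothesis K_sym : forall x y, 0 < x -> 0 < y -> K x y = K y x.
Hypothesis K_hom : forall l x y, 0 < l -> 0 < x -> 0 < y ->
  K (l * x) (l * y) = l `^ (b - a) * K x y.
Hypothesis K_le : forall x y, 0 < x -> 0 < y ->
  K x y <= C2 * (x `^ (- a) * y `^ b + x `^ b * y `^ (- a)).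
Hypothesis C2_gt0 : 0 < C2.

Lemma K_scaled_le L s u : 0 < L -> 0 < s -> 0 < u ->
  K u (L * s) <= C2 * (L `^ b * s `^ b * u `^ (- a) + L `^ (- a) * s `^ (- a) * u `^ b).
Proof.
move=> L0 s0 u0; apply: le_trans (K_le u (L * s) u0 (mulr_gt0 L0 s0)) _.
by rewrite !(powRM _ (ltW L0) (ltW s0)) le_eqVlt; apply: predU1l; ring.
Qed.

Lemma K_scaled_lipschitz C3 c D L u s1 s2 :
  (forall x y, c <= x <= D -> 0 < y -> `|dxK K x y| <= C3 * (y `^ (- a) + y `^ b)) ->
  0 < c -> 0 < L -> 0 < u -> c <= s1 <= D -> c <= s2 <= D ->
  `|K u (L * s1) - K u (L * s2)| <=
    C3 * (L `^ b * u `^ (- a) + L `^ (- a) * u `^ b) * `|s1 - s2|.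
Proof.
move=> dK c0 L0 u0 s1in s2in.
have [s10 s20] : 0 < s1 /\ 0 < s2 by case/andP: s1in; case/andP: s2in; lra.
set w := u / L; have w0 : 0 < w by rewrite divr_gt0.
have Lw : L * w = u by rewrite mulrC divfK // lt0r_neq0.
have K_rescale s : 0 < s -> K u (L * s) = L `^ (b - a) * K s w.
  by move=> s0; rewrite -K_hom // Lw K_sym ?mulr_gt0.
rewrite !K_rescale // -mulrBr normrM ger0_norm ?powR_ge0 //.
have K_lip : `|K s1 w - K s2 w| <= C3 * (w `^ (- a) + w `^ b) * `|s1 - s2|.
  apply: (@dist_le_derive1_bound R (fun t => K t w)) s1in s2in => x xin.
  have x0 : 0 < x by case/andP: xin; lra.
  by case: (K_C1 x w x0 w0) => der _ _ _ _; split => //; exact: dK.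
apply: le_trans (ler_wpM2l (powR_ge0 _ _) K_lip) _.
have Lba : L `^ (b - a) = L `^ b * L `^ (- a).
  by rewrite powRD //; apply/implyP => _; exact: lt0r_neq0.
rewrite /w !powR_ratio ?(ltW u0) // Lba le_eqVlt; apply: predU1l.
by field; rewrite !lt0r_neq0 ?powR_gt0.
Qed.

Variables (h : R -> R) (eps : R).
Local Notation mu := (@lebesgue_measure R).
Local Notation I01 := (oitv (0 : R) 1).
Hypothesis h_ge0 : forall x, 0 < x -> 0 <= h x.
Hypothesis h_cont : forall x, 0 < x -> {for x, continuous h}.
Hypothesis h_mass : (\int[mu]_(x in I01) (h x)%:E <= 1)%E.
Hypothesis eps_gt0 : 0 < eps.
Hypothesis eps_le_L : eps <= L_eps h a b eps.

Let L := L_eps h a b eps.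
Let G X y := h y / L * Keps K eps y (L * X).

Let L_gt0 : 0 < L. Proof. exact: lt_le_trans eps_le_L. Qed.

Let scaled_shift X : L * X + eps = L * (X + eps / L).
Proof. by rewrite mulrDr mulrCA divff ?mulr1 // lt0r_neq0. Qed.

Let shift_small X : 0 <= X -> X <= X + eps / L <= X + 1.
Proof.
move=> X0; apply/andP; split; first by rewrite lerDl divr_ge0 // ltW.
by rewrite lerD2l ler_pdivrMr // mul1r.
Qed.

Lemma mu_eps_normalized : L `^ b / L * mu_eps h a eps <= 1.
Proof.
have mu_ge0 : 0 <= mu_eps h a eps.
  by apply: Rintegral_ge0 => y /andP[y0 _]; rewrite mulr_ge0 ?h_ge0 ?powR_ge0.
apply: (normalized_moment_le1 b_lt1 mu_ge0 L_gt0).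
by rewrite /L /L_eps le_max; apply/orP; right.
Qed.

Lemma lambda_eps_normalized : L `^ (- a) / L * lambda_eps h b eps <= 1.
Proof.
have lambda_ge0 : 0 <= lambda_eps h b eps.
  by apply: Rintegral_ge0 => y /andP[y0 _]; rewrite mulr_ge0 ?h_ge0 ?powR_ge0.
have a_lt1 : - a < 1 by rewrite (lt_trans _ ltr01) // oppr_lt0.
apply: (normalized_moment_le1 a_lt1 lambda_ge0 L_gt0).
by rewrite opprK /L /L_eps le_max; apply/orP; left.
Qed.

Lemma measurable_Q_integrand X : 0 < X -> measurable_fun I01 (G X).
Proof.
move=> X0; apply: continuous_measurable_oitv01 => y /andP[y0 _].
have v0 : 0 < L * X + eps by rewrite addr_gt0 ?mulr_gt0.
have ye0 : 0 < y + eps by rewrite addr_gt0.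
apply: cvgM; first by apply: cvgM; [exact: h_cont | exact: cvg_cst].
case: (K_C1 _ _ ye0 v0) => _ _ K_cont _ _.
apply: (continuous_comp (f := fun y => (y + eps, L * X + eps)) (g := fun p : R * R => K p.1 p.2)).
  have shift_cvg : (fun z => z + eps) @ y --> y + eps by apply: cvgD; [exact: cvg_id | exact: cvg_cst].
  exact: cvg_pair shift_cvg (cvg_cst _).
exact: K_cont.
Qed.

Lemma Q_integrand_dominated X : 0 < X -> forall y, 0 < y < 1 ->
  `|G X y| <= h y * (C2 * L `^ b * (X + eps / L) `^ b / L * (y + eps) `^ (- a)
                    + C2 * L `^ (- a) * (X + eps / L) `^ (- a) / L * (y + eps) `^ b).
Proof.
move=> X0 y /andP[y0 _]; have ye0 : 0 < y + eps by rewrite addr_gt0.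
have s0 : 0 < X + eps / L by rewrite addr_gt0 ?divr_gt0.
have hL_ge0 : 0 <= h y / L by rewrite divr_ge0 ?h_ge0 // ltW.
rewrite /G /Keps scaled_shift ger0_norm; last first.
  by apply: mulr_ge0 => //; apply: K_ge0 => //; exact: mulr_gt0.
apply: le_trans (ler_wpM2l hL_ge0 (K_scaled_le _ _ _ L_gt0 s0 ye0)) _.
by rewrite le_eqVlt; apply: predU1l; field; exact: lt0r_neq0.
Qed.

Lemma Q_eps_abs_le X : 0 < X ->
  `|Q_eps K h a b eps X| <= C2 * (X `^ b + (X + 1) `^ b + (X `^ (- a) + (X + 1) `^ (- a))).
Proof.
move=> X0; have [_ Q_le] := @dominated_by_h_shiftpow R h eps h_ge0 h_cont h_mass eps_gt0 _ _ _ _ _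
  (measurable_Q_integrand X X0) (Q_integrand_dominated X X0).
apply: le_trans Q_le _; set s := X + eps / L.
have [s_ge s_le] : X <= s /\ s <= X + 1 by apply/andP; exact: shift_small X (ltW X0).
have Xs : X <= s <= X + 1 by rewrite s_ge s_le.
have sb := powR_le_ends b X0 Xs; have sa := powR_le_ends (- a) X0 Xs.
have [mu_le lambda_le] := (mu_eps_normalized, lambda_eps_normalized).
rewrite (_ : C2 * L `^ b * s `^ b / L * mu_eps h a eps = C2 * s `^ b * (L `^ b / L * mu_eps h a eps)); last by ring.
rewrite (_ : C2 * L `^ (- a) * s `^ (- a) / L * lambda_eps h b eps =
  C2 * s `^ (- a) * (L `^ (- a) / L * lambda_eps h b eps)); last by ring.
have := ler_wpM2l (mulr_ge0 (ltW C2_gt0) (powR_ge0 s b)) mu_le.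
have := ler_wpM2l (mulr_ge0 (ltW C2_gt0) (powR_ge0 s (- a))) lambda_le.
have := ler_wpM2l (ltW C2_gt0) sb; have := ler_wpM2l (ltW C2_gt0) sa.
lra.
Qed.

Lemma Q_eps_lipschitz C3 c d X1 X2 :
  (forall x y, c <= x <= d + 1 -> 0 < y -> `|dxK K x y| <= C3 * (y `^ (- a) + y `^ b)) ->
  0 < c -> c <= X1 <= d -> c <= X2 <= d ->
  `|Q_eps K h a b eps X1 - Q_eps K h a b eps X2| <= 2 * C3 * `|X1 - X2|.
Proof.
move=> dK c0 X1in X2in.
have [X10 X20] : 0 < X1 /\ 0 < X2 by case/andP: X1in; case/andP: X2in; lra.
have C3_ge0 : 0 <= C3.
  have cin : c <= c <= d + 1 by case/andP: X1in; rewrite lexx /=; lra.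
  by have := dK c 1 cin ltr01; rewrite !powR1 /=; have := normr_ge0 (dxK K c 1); lra.
have s_in X : c <= X <= d -> c <= X + eps / L <= d + 1.
  case/andP => cX Xd; have /andP[? ?] := shift_small X (ltW (lt_le_trans c0 cX)).
  by apply/andP; split; lra.
have G_int X : 0 < X -> mu.-integrable I01 (EFin \o G X).
  by move=> X0; case: (@dominated_by_h_shiftpow R h eps h_ge0 h_cont h_mass eps_gt0 _ _ _ _ _
    (measurable_Q_integrand X X0) (Q_integrand_dominated X X0)).
rewrite /Q_eps -RintegralB; [|exact: measurable_oitv01 | exact: G_int | exact: G_int].
have G_dom y : 0 < y < 1 -> `|G X1 y - G X2 y| <=
    h y * (C3 * `|X1 - X2| * L `^ b / L * (y + eps) `^ (- a)
           + C3 * `|X1 - X2| * L `^ (- a) / L * (y + eps) `^ b).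
  case/andP => y0 _; have ye0 : 0 < y + eps by rewrite addr_gt0.
  have hL_ge0 : 0 <= h y / L by rewrite divr_ge0 ?h_ge0 // ltW.
  rewrite /G /Keps !scaled_shift -mulrBr normrM ger0_norm //.
  have := K_scaled_lipschitz C3 c (d + 1) L (y + eps) _ _ dK c0 L_gt0 ye0 (s_in _ X1in) (s_in _ X2in).
  rewrite (_ : X1 + eps / L - (X2 + eps / L) = X1 - X2); last by ring.
  move=> K_lip; apply: le_trans (ler_wpM2l hL_ge0 K_lip) _.
  by rewrite le_eqVlt; apply: predU1l; field; exact: lt0r_neq0.
have G_meas : measurable_fun I01 (fun y => G X1 y - G X2 y).
  by apply: measurable_funB; exact: measurable_Q_integrand.
have [_ Q_le] := @dominated_by_h_shiftpow R h eps h_ge0 h_cont h_mass eps_gt0 _ _ _ _ _ G_meas G_dom.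
apply: le_trans Q_le _.
rewrite (_ : C3 * `|X1 - X2| * L `^ b / L * mu_eps h a eps =
  C3 * `|X1 - X2| * (L `^ b / L * mu_eps h a eps)); last by ring.
rewrite (_ : C3 * `|X1 - X2| * L `^ (- a) / L * lambda_eps h b eps =
  C3 * `|X1 - X2| * (L `^ (- a) / L * lambda_eps h b eps)); last by ring.
have w0 : 0 <= C3 * `|X1 - X2| by rewrite mulr_ge0.
have := ler_wpM2l w0 mu_eps_normalized; have := ler_wpM2l w0 lambda_eps_normalized.
lra.
Qed.

End Q_eps_estimates.

Theorem lemma3p8 (R : realType) (a b rho C1 C2 : R) (K : R -> R -> R)
  (eps : nat -> R) (h : nat -> R -> R) :
  0 < a -> b < 1 ->
  (* assumptions on the kernel K *)
  C1_quadrant K ->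
  (forall x y, 0 < x -> 0 < y -> 0 <= K x y) ->
  (forall x y, 0 < x -> 0 < y -> K x y = K y x) ->
  (forall l x y, 0 < l -> 0 < x -> 0 < y ->
     K (l * x) (l * y) = l `^ (b - a) * K x y) ->
  0 < C1 -> 0 < C2 ->
  (forall x y, 0 < x -> 0 < y ->
     C1 * (x `^ (- a) * y `^ b + x `^ b * y `^ (- a)) <= K x y /\
     K x y <= C2 * (x `^ (- a) * y `^ b + x `^ b * y `^ (- a))) ->
  (forall d D, 0 < d -> d <= D -> exists C3 : R,
     forall x y, d <= x -> x <= D -> 0 < y ->
       `|dxK K x y| <= C3 * (y `^ (- a) + y `^ b)) ->
  (* rho *)
  Num.max b 0 < rho -> rho < 1 ->
  (* the sequence eps -> 0 *)
  (forall n, 0 < eps n) ->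
  eps n @[n --> \oo] --> 0 ->
  (* the functions h_eps *)
  (forall n x, 0 < x -> 0 <= h n x) ->
  (forall n x, 0 < x -> {for x, continuous (h n)}) ->
  (forall n r, 0 < r ->
     (\int[lebesgue_measure]_(x in (oitv 0 r)) (h n x)%:E <= (r `^ (1 - rho))%:E)%E) ->
  (forall n, r `^ (rho - 1) * Rintegral lebesgue_measure (oitv 0 r) (h n)
               @[r --> +oo] --> (1 : R)) ->
  (forall n (phi : R -> R), test_fun phi ->
     lebesgue_measure.-integrable (oray 0)
       (fun x => (derive1 phi x)%:E * Ieps K (eps n) (h n) x)%E /\
     (\int[lebesgue_measure]_(x in (oray 0))
        ((derive1 phi x)%:E * Ieps K (eps n) (h n) x)
      = (Rintegral lebesgue_measure (oray 0) (fun x => derive1 phi x * (x * h n x))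
         + (1 - rho) * Rintegral lebesgue_measure (oray 0) (fun x => phi x * h n x))%:E)%E) ->
  (* L_eps -> oo *)
  L_eps (h n) a b (eps n) @[n --> \oo] --> +oo ->
  exists (sigma : nat -> nat) (Q : R -> R),
    (forall n, (sigma n < sigma n.+1)%N) /\
    (forall x, 0 < x -> {for x, continuous Q}) /\
    (forall c d, 0 < c -> c <= d -> forall e, 0 < e ->
       exists N : nat, forall n, (N <= n)%N -> forall X, c <= X -> X <= d ->
         `|Q_eps K (h (sigma n)) a b (eps (sigma n)) X - Q X| < e).
Proof.
move=> a_gt0 b_lt1 K_C1 K_ge0 K_sym K_hom _ C2_gt0 K_bounds dK_bound _ _ eps_gt0 eps_cvg
  h_ge0 h_cont h_mass _ _ L_cvg.
have K_le x y : 0 < x -> 0 < y -> K x y <= C2 * (x `^ (- a) * y `^ b + x `^ b * y `^ (- a)).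
  by move=> x0 y0; case: (K_bounds x y x0 y0).
have h_mass1 n : (\int[lebesgue_measure]_(x in oitv 0 1) (h n x)%:E <= 1)%E.
  by have := h_mass n 1 ltr01; rewrite powR1.
have eps_le1 : \forall n \near \oo, eps n <= 1.
  move/cvgrPdist_le : eps_cvg => /(_ 1 ltr01); apply: filterS => n.
  by rewrite sub0r normrN ger0_norm // ltW.
have L_ge1 : \forall n \near \oo, 1 <= L_eps (h n) a b (eps n).
  by move/cvgryPge : L_cvg; apply.
have [N0 _ eps_le_L] : \forall n \near \oo, eps n <= L_eps (h n) a b (eps n).
  by apply: filterS2 eps_le1 L_ge1 => n; exact: le_trans.
pose f m := Q_eps K (h (N0 + m)) a b (eps (N0 + m)).
have f_bounded X : 0 < X -> exists B, forall m, `|f m X| <= B.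
  move=> X0; exists (C2 * (X `^ b + (X + 1) `^ b + (X `^ (- a) + (X + 1) `^ (- a)))) => m.
  exact: (@Q_eps_abs_le R a b C2 K a_gt0 b_lt1 K_C1 K_ge0 K_le C2_gt0 _ _ (h_ge0 _) (h_cont _)
    (h_mass1 _) (eps_gt0 _) (eps_le_L _ (leq_addr m N0)) X X0).
have f_lipschitz c d : 0 < c -> c <= d -> exists k, forall m x y,
    c <= x <= d -> c <= y <= d -> `|f m x - f m y| <= k * `|x - y|.
  move=> c0 cd; have [C3 dK] := dK_bound c (d + 1) c0 (ler_wpDr ler01 cd).
  exists (2 * C3) => m x y xin yin.
  apply: (@Q_eps_lipschitz R a b C2 K a_gt0 b_lt1 K_C1 K_ge0 K_sym K_hom K_le _ _ (h_ge0 _)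
    (h_cont _) (h_mass1 _) (eps_gt0 _) (eps_le_L _ (leq_addr m N0)) C3 c d x y _ c0 xin yin).
  by move=> u v /andP[cu ud]; exact: dK.
have [sigma [Q [sigma_incr [Q_cont Q_unif]]]] := arzela_ascoli_pos f f_bounded f_lipschitz.
by exists (fun n => N0 + sigma n)%N, Q; split => [n|]; first by rewrite ltn_add2l.
Qed.
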